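(* Let $F=F_+\tilde{*}F_-$ be a twisted plumbing along $U$ with defect $m\ge1$, with pinch points $x=\{x_1,\dots,x_m\}$. Suppose every component $U_0$ of $(U\cap Q)\setminus x$, having $k$ points of $x$ on its boundary, satisfies: $|\partial U_0\cap L|\equiv k\pmod 2$; $|\partial U_0\cap L|\ge 3$ if $k=1$; and $|\partial U_0\cap L|\ge 2$ if $k=2$. Then $|\partial U\cap L|\ge 2m+4$.
   Context: Let $F$ be a spanning surface for a link $L\subset S^3$ (compact surface, orientable or not, no closed components, $\partial F=L$). Twisted plumbing: let $Q\subset S^3$ be a 2-sphere with regular neighborhood $\nu Q\cong Q\times[-1,1]$, $Q=Q\times\{0\}$, projection $\pi_Q:\nu Q\to Q$. Let $H_\pm$ be the components of $S^3\setminus\nu Q$, $B_\pm=H_\pm\cup\nu Q$, $F_\pm=F\cap B_\pm$, and $U=F\cap\nu Q$. Isotope $F$ near $U$ so that for each $y\in Q$ the fiber $\pi_Q^{-1}(y)$ either meets $F$ transversely or meets $F$ in a properly embedded arc of $F$, minimizing the number $m$ of points $x_1,\dots,x_m\in Q$ over which the fiber is not transverse to $U$; then, fixing $F\cap\pi_Q^{-1}(x)$, isotope $F$ near $U$ so that $U\cap Q$ is a pinched disk whose pinch points are $x=\{x_1,\dots,x_m\}$. Then $F=F_+\tilde{*}F_-$ is a twisted plumbing along $U$ with defect $m$; $Q$ cut along $U\cap Q$ is the twisted plumbing cap $V$, and $U$ (identified with $U\cap Q$) is its shadow; $\partial U\cap L$ means the points of $L$ on the boundary of the pinched disk $U\cap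 Q$. *)

(* Combinatorial-geometric model of the shadow
   U ∩ Q of a twisted plumbing: a closed unit disk in R^2 in which m
   pairwise disjoint chords are collapsed to the pinch points x_1..x_m. *)
From HB Require Import structures.
From mathcomp Require Import all_boot all_order all_algebra.
From mathcomp Require Import all_classical all_reals all_analysis.
Set Implicit Arguments. Unset Strict Implicit. Unset Printing Implicit Defensive.
Import Order.TTheory GRing.Theory Num.Theory.
Import numFieldNormedType.Exports.
Local Open Scope classical_set_scope.
Local Open Scope ring_scope.

Section PinchedDisk.
Variable R : realType.

Definition unit_disk : set (R * R) := [set p | p.1 ^+ 2 + p.2 ^+ 2 <= 1].
Definition unit_circle : set (R * R) := [set p | p.1 ^+ 2 + p.2 ^+ 2 = 1].

Definition segment (a b : R * R) : set (R * R) :=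
  [set p | exists2 t : R, 0 <= t <= 1 &
     p = ((1 - t) * a.1 + t * b.1, (1 - t) * a.2 + t * b.2)].

Definition pinch_data (m : nat) (a b : 'I_m -> R * R) : Prop :=
  (forall i, a i != b i /\ unit_circle (a i) /\ unit_circle (b i)) /\
  (forall i j, i != j -> segment (a i) (b i) `&` segment (a j) (b j) = set0).

(* The pinched disk minus its pinch points, pulled back to the disk. *)
Definition pinched_complement (m : nat) (a b : 'I_m -> R * R) : set (R * R) :=
  unit_disk `\` \bigcup_(i in [set: 'I_m]) segment (a i) (b i).

Definition boundary_link_points (m : nat) (a b : 'I_m -> R * R)
    (Lp : seq (R * R)) : Prop :=
  uniq Lp /\ (forall q, q \in Lp -> unit_circle q /\
     forall i, ~ segment (a i) (b i) q).

(* For the component U0 = connected_component W p of W = pinched_complement: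
   number of pinch points on its boundary (chords in its closure) *)
Definition comp_pinch_count (m : nat) (a b : 'I_m -> R * R) (U0 : set (R * R))
  : nat := count (fun i => `[< segment (a i) (b i) `<=` closure U0 >]) (enum 'I_m).

Definition comp_link_count (Lp : seq (R * R)) (U0 : set (R * R)) : nat :=
  count (fun q => q \in closure U0) Lp.

End PinchedDisk.

(* The chords cut the disk into convex cells, each determined by the sign vector of the m
   affine functions [orient (a j) (b j)] vanishing on the chord lines; these cells are the
   components of the pinched disk minus its pinch points.  Chord i borders exactly two
   cells, whose sign vectors differ only at i, and a family of sign vectors containing such
   a pair for each of the m coordinates has more than m elements: at least m + 1 cells
   border a chord.  On each of them k >= 1 and the hypotheses force n + k >= 4.  Summing
   over these cells, every chord is counted twice and every point of L lies in the closure
   of at most one cell, so 4 (m + 1) <= |dU ∩ L| + 2 m. *)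

From HB Require Import structures.
From mathcomp Require Import all_boot all_order all_algebra.
From mathcomp Require Import all_classical all_reals all_analysis.
From mathcomp Require Import ring lra zify.
Set Implicit Arguments. Unset Strict Implicit. Unset Printing Implicit Defensive.
Import Order.TTheory GRing.Theory Num.Theory.
Import numFieldNormedType.Exports.

Lemma card_gt_flip_pairs m (T : {set {ffun 'I_m -> bool}})
    (u v : 'I_m -> {ffun 'I_m -> bool}) :
  0 < #|T| -> (forall i, u i \in T) -> (forall i, v i \in T) ->
  (forall i, u i i != v i i) -> (forall i j, j != i -> u i j = v i j) ->
  m < #|T|.
Proof.
move=> T0 uT vT uv_i uv_j.
(* Forgetting coordinate k identifies u k with v k, so the images of T under truncation to
   the first k coordinates grow strictly with k. *)
pose trunc k (s : {ffun 'I_m -> bool}) := [ffun j : 'I_m => (j < k) && s j].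
have truncK k s : trunc k (trunc k.+1 s) = trunc k s.
  by apply/ffunP => j; rewrite !ffunE; case: (ltnP j k) => //= jk; rewrite ltnS (ltnW jk).
suff card_trunc k : k <= m -> k < #|trunc k @: T|.
  exact: leq_trans (card_trunc m (leqnn m)) (leq_imset_card _ _).
elim: k => [_ | k IH km].
  by case/card_gt0P: T0 => s sT; apply/card_gt0P; exists (trunc 0 s); exact: imset_f.
have : k < #|trunc k @: (trunc k.+1 @: T)|.
  by rewrite -imset_comp (eq_imset _ (truncK k)) IH // ltnW.
move/leq_ltn_trans; apply; rewrite ltn_neqAle leq_imset_card andbT.
apply/negP => /imset_injP trunc_inj; set i := Ordinal km.
have : trunc k.+1 (u i) = trunc k.+1 (v i).
  apply: trunc_inj; rewrite ?imset_f ?truncK //.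
  apply/ffunP => j; rewrite !ffunE; case: ltnP => //= jk; apply: uv_j.
  by apply: contraTneq jk => ->; rewrite ltnn.
by move/ffunP/(_ i); rewrite !ffunE /= ltnSn; exact/eqP/uv_i.
Qed.

Lemma sum_count_exchange (I : finType) (J : Type) (A : {pred I}) (P : I -> pred J)
    (r : seq J) :
  \sum_(i in A) count (P i) r = \sum_(x <- r) #|[pred i in A | P i x]|.
Proof.
elim: r => [|x r IH]; first by rewrite big_nil big1.
rewrite big_cons -IH /= big_split /=; congr (_ + _).
rewrite -sum1_card big_mkcond [RHS]big_mkcond; apply: eq_bigr => i _.
by rewrite inE; case: (i \in A); case: (P i x).
Qed.

Lemma parity_add_ge4 n k : 0 < k -> n = k %[mod 2] ->
  (k = 1 -> 3 <= n) -> (k = 2 -> 2 <= n) -> 4 <= n + k.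
Proof. lia. Qed.

Local Open Scope classical_set_scope.
Local Open Scope ring_scope.

Section Plane.
Variable R : realType.
Implicit Types (p q c : R * R) (x y t : R).

Definition lerp p q t : R * R :=
  ((1 - t) * p.1 + t * q.1, (1 - t) * p.2 + t * q.2).

Definition norm2 p : R := p.1 ^+ 2 + p.2 ^+ 2.

Definition dist2 p q : R := (q.1 - p.1) ^+ 2 + (q.2 - p.2) ^+ 2.

Definition orient p q c : R := (q.1 - p.1) * (c.2 - p.2) - (q.2 - p.2) * (c.1 - p.1).

Lemma lerp0 p q : lerp p q 0 = p.
Proof. by case: p => p1 p2; rewrite /lerp /= subr0 !mul1r !mul0r !addr0. Qed.

Lemma lerp1 p q : lerp p q 1 = q.
Proof. by case: q => q1 q2; rewrite /lerp /= subrr !mul1r !mul0r !add0r. Qed.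

Lemma orient_lerp p q c c' t :
  orient p q (lerp c c' t) = (1 - t) * orient p q c + t * orient p q c'.
Proof. rewrite /orient /lerp /=; ring. Qed.

Lemma norm2_lerp p q t :
  norm2 (lerp p q t) = (1 - t) * norm2 p + t * norm2 q - t * (1 - t) * dist2 p q.
Proof. rewrite /norm2 /lerp /dist2 /=; ring. Qed.

Lemma dist2_gt0 p q : p != q -> 0 < dist2 p q.
Proof.
case: p q => [p1 p2] [q1 q2] pq; rewrite /dist2 /= lt0r addr_ge0 ?sqr_ge0 // andbT.
rewrite paddr_eq0 ?sqr_ge0 // !sqrf_eq0 !subr_eq0.
by apply: contra pq => /andP[/eqP <- /eqP <-].
Qed.

Lemma disk_lerp p q t :
  unit_disk p -> unit_disk q -> 0 <= t <= 1 -> unit_disk (lerp p q t).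
Proof.
move=> hp hq /andP[t0 t1]; change (norm2 (lerp p q t) <= 1); rewrite norm2_lerp.
have : 0 <= t * (1 - t) * dist2 p q by rewrite !mulr_ge0 ?subr_ge0 // addr_ge0 ?sqr_ge0.
have : (1 - t) * norm2 p <= 1 - t by rewrite ler_piMr ?subr_ge0.
have : t * norm2 q <= t by rewrite ler_piMr.
lra.
Qed.

Lemma circle_disk p : unit_circle p -> unit_disk p.
Proof. by rewrite /unit_circle /unit_disk /= => ->. Qed.

Lemma segment_lerp p q t : 0 <= t <= 1 -> segment p q (lerp p q t).
Proof. by exists t. Qed.

Lemma segment_start p q : segment p q p.
Proof.
by rewrite -[X in segment _ _ X](lerp0 p q); apply: segment_lerp; rewrite lexx ler01.
Qed.

Lemma orient_segment p q c : segment p q c -> orient p q c = 0.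
Proof. by case=> t _ ->; rewrite /orient /=; ring. Qed.

Lemma circle_segment_disk p q c :
  unit_circle p -> unit_circle q -> segment p q c -> unit_disk c.
Proof. by move=> /circle_disk hp /circle_disk hq [t ht ->]; exact: disk_lerp. Qed.

Definition left_shift p q c : R * R := (c.1 - (q.2 - p.2), c.2 + (q.1 - p.1)).

Lemma orient_left_shift p q c : orient p q (left_shift p q c) = orient p q c + dist2 p q.
Proof. rewrite /orient /left_shift /dist2 /=; ring. Qed.

Lemma norm2_midpoint p q : unit_circle p -> unit_circle q -> p != q ->
  norm2 (lerp p q (1 / 2)) < 1.
Proof.
move=> hp hq /dist2_gt0 pq.
by rewrite norm2_lerp (_ : norm2 p = 1) // (_ : norm2 q = 1) //; lra.
Qed.

Lemma collinear_lerp p q c : p != q -> orient p q c = 0 -> exists t, c = lerp p q t.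
Proof.
move=> /dist2_gt0 /lt0r_neq0 D0 hc.
set u := (q.1 - p.1) * (c.1 - p.1) + (q.2 - p.2) * (c.2 - p.2).
have e1 : (c.1 - p.1) * dist2 p q = u * (q.1 - p.1) + (p.2 - q.2) * orient p q c.
  by rewrite /u /dist2 /orient; ring.
have e2 : (c.2 - p.2) * dist2 p q = u * (q.2 - p.2) + (q.1 - p.1) * orient p q c.
  by rewrite /u /dist2 /orient; ring.
rewrite hc mulr0 addr0 in e1 e2; exists (u / dist2 p q).
apply: injective_projections => /=.
- by rewrite -[c.1](subrK p.1) -[c.1 - p.1](mulfK D0) e1; field.
- by rewrite -[c.2](subrK p.2) -[c.2 - p.2](mulfK D0) e2; field.
Qed.

Lemma segment_of_orient_eq0 p q c : p != q -> unit_circle p -> unit_circle q ->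
  unit_disk c -> orient p q c = 0 -> segment p q c.
Proof.
move=> pq hp hq hc /(collinear_lerp pq) [t ct]; subst c; exists t => //.
move: hc; change (norm2 (lerp p q t) <= 1 -> 0 <= t <= 1).
rewrite norm2_lerp (_ : norm2 p = 1) // (_ : norm2 q = 1) // => hD.
have : 0 <= t * (1 - t) by rewrite -(pmulr_lge0 _ (dist2_gt0 pq)); lra.
by move=> h; apply/andP; split; nra.
Qed.

Lemma lerp_continuous p q : continuous (lerp p q).
Proof.
have affine u v : continuous (fun t : R => (1 - t) * u + t * v).
  move=> t; apply: cvgD; apply: cvgMl; last exact: cvg_id.
  by apply: cvgB; [exact: cvg_cst | exact: cvg_id].
by move=> t; apply: (@cvg_pair _ _ _ _ (nbhs _) (nbhs _)); exact: affine.
Qed.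

Lemma orient_continuous p q : continuous (orient p q).
Proof.
move=> c; apply: cvgB; apply: cvgMr; apply: cvgB; try exact: cvg_cst.
- exact: (@cvg_snd _ _ (nbhs c.1) (nbhs c.2)).
- exact: (@cvg_fst _ _ (nbhs c.1) (nbhs c.2)).
Qed.

Lemma norm2_continuous : continuous norm2.
Proof.
move=> c; apply: cvgD; apply: cvgM.
- exact: (@cvg_fst _ _ (nbhs c.1) (nbhs c.2)).
- exact: (@cvg_fst _ _ (nbhs c.1) (nbhs c.2)).
- exact: (@cvg_snd _ _ (nbhs c.1) (nbhs c.2)).
- exact: (@cvg_snd _ _ (nbhs c.1) (nbhs c.2)).
Qed.

Lemma lerp_sign x y t : x != 0 -> y != 0 -> (0 < x) = (0 < y) -> 0 <= t <= 1 ->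
  (1 - t) * x + t * y != 0 /\ (0 < (1 - t) * x + t * y) = (0 < x).
Proof.
move=> x0 y0 xy /andP[t0 t1]; have [xp | xn] := ltP 0 x.
  have yp : 0 < y by rewrite -xy.
  have : 0 < (1 - t) * x + t * y by nra.
  by move=> h; rewrite gt_eqF // h.
have xn' : x < 0 by rewrite lt_neqAle x0.
have yn : y < 0 by rewrite lt_neqAle y0 leNgt -xy -leNgt xn.
have : (1 - t) * x + t * y < 0 by nra.
by move=> h; rewrite lt_eqF // ltNge ltW.
Qed.

Lemma lerp_root x y : x * y < 0 -> exists2 t, 0 <= t <= 1 & (1 - t) * x + t * y = 0.
Proof.
wlog xp : x y / 0 < x => [H xy|xy].
  have [|xn] := ltP 0 x; first by move=> xp; exact: H.
  have xn' : 0 < - x.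
    by rewrite oppr_gt0 lt_neqAle xn andbT; apply: contraTneq xy => ->; rewrite mul0r ltxx.
  have [t ht e] := H (- x) (- y) xn' ltac:(by rewrite mulrNN).
  by exists t => //; rewrite -[LHS]opprK opprD -!mulrN e oppr0.
have yn : y < 0 by rewrite -(pmulr_rlt0 _ xp).
have d0 : 0 < x - y by lra.
exists (x / (x - y)).
  by apply/andP; split; [rewrite divr_ge0 ?ltW | rewrite ler_pdivrMr // mul1r; lra].
have -> : (1 - x / (x - y)) * x + x / (x - y) * y = x - x / (x - y) * (x - y) by ring.
by rewrite divfK ?subrr // gt_eqF.
Qed.

Lemma lerp_sign_const x y :
  (forall t, 0 <= t <= 1 -> (1 - t) * x + t * y != 0) ->
  forall t, 0 <= t <= 1 -> (0 < (1 - t) * x + t * y) = (0 < x).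
Proof.
move=> nz; have x0 : x != 0 by have := nz 0; rewrite subr0 mul1r mul0r addr0; apply; lra.
have y0 : y != 0 by have := nz 1; rewrite subrr mul1r mul0r add0r; apply; lra.
suff xy : (0 < x) = (0 < y) by move=> t ht; exact: (lerp_sign x0 y0 xy ht).2.
apply/eqP; apply: contraT => xy.
have [t ht /eqP] : exists2 t, 0 <= t <= 1 & (1 - t) * x + t * y = 0.
  apply: lerp_root; move: xy x0 y0.
  by case: (ltrgtP 0 x) => // hx; case: (ltrgtP 0 y) => // hy _ _ _; nra.
by rewrite (negbTE (nz t ht)).
Qed.

Lemma near_lt (T : topologicalType) (f : T -> R) (x : T) y :
  {for x, continuous f} -> f x < y -> \forall z \near x, f z < y.
Proof. by move=> cf /lt_nbhsl; exact: cf. Qed.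

Lemma near_sign (T : topologicalType) (f : T -> R) (x : T) :
  {for x, continuous f} -> f x != 0 -> \forall z \near x, f z != 0 /\ (0 < f z) = (0 < f x).
Proof.
move=> cf fx0; have [fx | fx] := ltrP 0 (f x).
  have fxz : \forall z \near x, 0 < f z := cf _ (lt_nbhsr fx).
  apply: filterS fxz => z fz.
  by rewrite gt_eqF // fz fx.
have {}fx : f x < 0 by rewrite lt_neqAle fx0.
apply: filterS (near_lt cf fx) => z fz.
by rewrite lt_eqF // !ltNge !ltW.
Qed.

Lemma near0_pm (P : R -> Prop) :
  (\forall x \near 0, P x) -> exists2 d, 0 < d <= 1 & P d /\ P (- d).
Proof.
move=> /nbhs_ballP [e /= e0 H]; set d := Num.min (e / 2) 1.
have d0 : 0 < d by rewrite lt_min ltr01 andbT divr_gt0.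
have de : d < e by rewrite gt_min ltr_pdivrMr // ltr_pMr // ltr1n.
exists d; first by rewrite d0 ge_min lexx orbT.
by split; apply: H; rewrite /ball /= sub0r ?opprK ?normrN gtr0_norm.
Qed.

Lemma closure_lerp (C : set (R * R)) q c :
  (forall t, 0 < t <= 1 -> C (lerp q c t)) -> closure C q.
Proof.
move=> Cqc B qB; have : \forall t \near 0, B (lerp q c t).
  by apply: lerp_continuous; rewrite lerp0.
case/near0_pm => d /andP[d0 d1] [Bd _].
by exists (lerp q c d); split => //; apply: Cqc; rewrite d0.
Qed.

Lemma convex_connected (C : set (R * R)) :
  (forall p q t, C p -> C q -> 0 <= t <= 1 -> C (lerp p q t)) -> connected C.
Proof.
move=> convC; have [[p Cp] | C0] := pselect (C !=set0); last first.
  have -> : C = set0 by apply/seteqP; split => // x Cx; apply: C0; exists x.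
  exact: connected0.
have -> : C = \bigcup_(q in C) (lerp p q @` `[0, 1]).
  apply/seteqP; split => [q Cq | q [r Cr [t ht <-]]].
    by exists q => //; exists 1; [rewrite set_itvE /= lexx ler01 | exact: lerp1].
  by apply: convC => //; move: ht; rewrite set_itvE.
apply: bigcup_connected.
  by exists p => q Cq; exists 0; [rewrite set_itvE /= lexx ler01 | exact: lerp0].
move=> q Cq; apply: connected_continuous_connected; first exact: segment_connected.
by apply: continuous_subspaceT; exact: lerp_continuous.
Qed.

End Plane.

Section Chords.
Variables (R : realType) (m : nat) (a b : 'I_m -> R * R).
Hypothesis chords : pinch_data a b.

Local Notation chord i := (segment (a i) (b i)).
Local Notation sd j := (orient (a j) (b j)).
Local Notation W := (pinched_complement a b).

Lemma chord_ends_neq i : a i != b i. Proof. by case: (chords.1 i). Qed.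
Lemma chord_a_circle i : unit_circle (a i). Proof. by case: (chords.1 i) => _ []. Qed.
Lemma chord_b_circle i : unit_circle (b i). Proof. by case: (chords.1 i) => _ []. Qed.

Lemma chord_in_disk i q : chord i q -> unit_disk q.
Proof. exact: circle_segment_disk (chord_a_circle i) (chord_b_circle i). Qed.

Lemma chord_of_orient_eq0 j q : unit_disk q -> sd j q = 0 -> chord j q.
Proof.
exact: segment_of_orient_eq0 (chord_ends_neq j) (chord_a_circle j) (chord_b_circle j).
Qed.

Lemma pinched_complementE q : W q <-> unit_disk q /\ forall j, sd j q != 0.
Proof.
split => [[dq nq] | [dq nq]]; split => //.
  by move=> j; apply/negP => /eqP /(chord_of_orient_eq0 dq) qj; apply: nq; exists j.
by case=> j _ /orient_segment; apply/eqP.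
Qed.

Lemma orient_chord_neq0 i j q : i != j -> chord i q -> sd j q != 0.
Proof.
move=> ij qi; apply/negP => /eqP sj.
have qj := chord_of_orient_eq0 (chord_in_disk qi) sj.
have : (chord i `&` chord j) q by [].
by rewrite (chords.2 i j ij).
Qed.

Lemma chord_sign i j q : i != j -> chord i q -> (0 < sd j q) = (0 < sd j (a i)).
Proof.
move=> ij [t ht ->]; change ((0 < sd j (lerp (a i) (b i) t)) = (0 < sd j (a i))).
rewrite orient_lerp; apply: lerp_sign_const ht => t' ht'.
by rewrite -orient_lerp; exact: orient_chord_neq0 ij (segment_lerp _ _ ht').
Qed.

Definition signs q : {ffun 'I_m -> bool} := [ffun j => 0 < sd j q].

Definition cell (s : {ffun 'I_m -> bool}) : set (R * R) := [set q | W q /\ signs q = s].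

Lemma cell_lerp s p q t : cell s p -> cell s q -> 0 <= t <= 1 -> cell s (lerp p q t).
Proof.
move=> [/pinched_complementE [dp np] sp] [/pinched_complementE [dq nq] sq] ht.
have sign j := lerp_sign (np j) (nq j)
  ltac:(by move/ffunP: sp => /(_ j); move/ffunP: sq => /(_ j); rewrite !ffunE => -> ->) ht.
split; last by rewrite -sp; apply/ffunP => j; rewrite !ffunE orient_lerp (sign j).2.
apply/pinched_complementE; split; first exact: disk_lerp.
by move=> j; rewrite orient_lerp; exact: (sign j).1.
Qed.

Lemma closure_cell_sign s y j : closure (cell s) y -> sd j y != 0 -> s j = (0 < sd j y).
Proof.
move=> sy /(near_sign (@orient_continuous _ _ _ y)) /sy [z [[_ <-] [_ e]]].
by rewrite ffunE e.
Qed.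

Lemma near_signs y : W y -> \forall z \near y, signs z = signs y.
Proof.
move=> /pinched_complementE [_ ny].
have near_y : \forall z \near y, forall j, sd j z != 0 /\ (0 < sd j z) = (0 < sd j y).
  exact: filter_forall (fun j => near_sign (@orient_continuous _ _ _ y) (ny j)).
by apply: filterS near_y => z zy; apply/ffunP => j; rewrite !ffunE (zy j).2.
Qed.

Lemma component_cell p : W p -> connected_component W p = cell (signs p).
Proof.
move=> Wp; apply/seteqP; split; last first.
  apply: connected_component_max => //; first by move=> q [].
  by apply: convex_connected => q r t; exact: cell_lerp.
have sep : separated (cell (signs p)) (W `\` cell (signs p)).
  split; apply/seteqP; split => // y.
  - move=> [sy [Wy ny]]; apply: ny; split => //; apply/ffunP => j; rewrite ffunE.
    by apply/esym/closure_cell_sign => //; case/pinched_complementE: Wy.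
  - move=> [[Wy sy] /(_ _ (near_signs Wy)) [z [[Wz nz] zy]]].
    by apply: nz; split => //; rewrite zy.
have cover : connected_component W p `<=` cell (signs p) `|` (W `\` cell (signs p)).
  move=> z /connected_component_sub Wz.
  by case: (pselect (cell (signs p) z)) => h; [left | right].
case: (connected_subset sep cover (@component_connected _ W p)) => // sub.
by have [_ []] := sub p (connected_component_refl Wp).
Qed.

(* The two cells adjacent to chord [i]. *)
Definition side i (e : bool) : {ffun 'I_m -> bool} :=
  [ffun j => if j == i then e else 0 < sd j (a i)].

Lemma near_chord_midpoint i : \forall y \near lerp (a i) (b i) (1 / 2),
  norm2 y < 1 /\ forall j, j != i -> sd j y != 0 /\ (0 < sd j y) = (0 < sd j (a i)).
Proof.
have ci : chord i (lerp (a i) (b i) (1 / 2)) by apply: segment_lerp; lra.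
apply: filterI.
  apply: near_lt (@norm2_continuous _ _) _.
  exact: norm2_midpoint (chord_a_circle i) (chord_b_circle i) (chord_ends_neq i).
have near_j j : \forall y \near lerp (a i) (b i) (1 / 2),
    j != i -> sd j y != 0 /\ (0 < sd j y) = (0 < sd j (a i)).
  case: (eqVneq j i) => [-> | ji]; first by apply: filterE => y /eqP.
  have ij : i != j by rewrite eq_sym.
  have near_c := near_sign (@orient_continuous _ _ _ _) (orient_chord_neq0 ij ci).
  by apply: filterS near_c => y; rewrite (chord_sign ij ci).
exact: filter_forall near_j.
Qed.

Lemma cell_side_nonempty i e : exists p, cell (side i e) p.
Proof.
set c := lerp (a i) (b i) (1 / 2).
have ci : chord i c by apply: segment_lerp; lra.
(* [pt d] moves off the midpoint [c] along the normal of chord [i]. *)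
set pt := lerp c (left_shift (a i) (b i) c).
have sd_pt d : sd i (pt d) = d * dist2 (a i) (b i).
  by rewrite orient_lerp orient_left_shift (orient_segment ci); ring.
pose P y := norm2 y < 1 /\ forall j, j != i -> sd j y != 0 /\ (0 < sd j y) = (0 < sd j (a i)).
have near_c : \forall y \near c, P y := near_chord_midpoint i.
have : \forall d \near 0, P (pt d) by apply: lerp_continuous; rewrite lerp0.
case/near0_pm => d /andP[d0 _] [Pd PNd]; set de := if e then d else - d.
have [de_nz de_sign] : de * dist2 (a i) (b i) != 0 /\ (0 < de * dist2 (a i) (b i)) = e.
  have D0 := dist2_gt0 (chord_ends_neq i).
  have dD := mulr_gt0 d0 D0.
  by case: e @de => /=; rewrite ?mulNr ?oppr_eq0 ?oppr_gt0 gt_eqF // ?dD // ltNge ltW.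
have [in_disk Pj] : P (pt de) by rewrite /de; case: (e).
exists (pt de); split.
  apply/pinched_complementE; split; first exact: ltW.
  by move=> j; case: (eqVneq j i) => [-> | ji]; [rewrite sd_pt | exact: (Pj j ji).1].
apply/ffunP => j; rewrite !ffunE; case: (eqVneq j i) => [-> | ji]; first by rewrite sd_pt.
exact: (Pj j ji).2.
Qed.

Lemma closure_cell_chord i s : chord i `<=` closure (cell s) <-> s = side i (s i).
Proof.
split => [cl | ->].
  apply/ffunP => j; rewrite ffunE; case: (eqVneq j i) => [-> // | ji].
  have ij : i != j by rewrite eq_sym.
  have ai := segment_start (a i) (b i).
  exact: closure_cell_sign (cl _ ai) (orient_chord_neq0 ij ai).
have [c [Wc sc]] := cell_side_nonempty i (s i).
move: (Wc) => /pinched_complementE [dc nc].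
move=> q qi; apply: (closure_lerp (c := c)) => t /andP[t0 t1].
have ht : 0 <= t <= 1 by rewrite ltW.
have sign j : sd j (lerp q c t) != 0 /\ (0 < sd j (lerp q c t)) = (0 < sd j c).
  rewrite orient_lerp; case: (eqVneq j i) => [-> | ji].
    rewrite (orient_segment qi) mulr0 add0r pmulr_rgt0 //.
    by split => //; apply: mulf_neq0; [exact: lt0r_neq0 | exact: nc].
  have ij : i != j by rewrite eq_sym.
  have := orient_chord_neq0 ij qi.
  have qc : (0 < sd j q) = (0 < sd j c).
    by move/ffunP: sc => /(_ j); rewrite !ffunE (negbTE ji) (chord_sign ij qi) => ->.
  move=> nq; have [nz ->] := lerp_sign nq (nc j) qc ht; split => //.
split; last by rewrite -sc; apply/ffunP => j; rewrite !ffunE (sign j).2.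
apply/pinched_complementE; split; first exact: disk_lerp (chord_in_disk qi) dc ht.
by move=> j; exact: (sign j).1.
Qed.

Lemma side_at i e : side i e i = e.
Proof. by rewrite ffunE eqxx. Qed.

Definition adjacent_signs : {set {ffun 'I_m -> bool}} :=
  [set side i e | i : 'I_m, e : bool].

Lemma side_adjacent i e : side i e \in adjacent_signs.
Proof. exact: imset2_f. Qed.

Lemma card_adjacent_signs : (0 < m)%N -> (m < #|adjacent_signs|)%N.
Proof.
move=> m0; apply: (@card_gt_flip_pairs _ _ (side^~ true) (side^~ false)).
- by apply/card_gt0P; exists (side (Ordinal m0) true); exact: side_adjacent.
- by move=> i; exact: side_adjacent.
- by move=> i; exact: side_adjacent.
- by move=> i; rewrite !side_at.
- by move=> i j ji; rewrite !ffunE (negbTE ji).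
Qed.

Lemma pinch_count_cell s :
  comp_pinch_count a b (cell s) = count (fun i => s == side i (s i)) (enum 'I_m).
Proof. by apply: eq_count => i; apply/asboolP/eqP => /closure_cell_chord. Qed.

Lemma sum_pinch_count :
  (\sum_(s in adjacent_signs) comp_pinch_count a b (cell s) = 2 * m)%N.
Proof.
under eq_bigr => s _ do rewrite pinch_count_cell.
rewrite sum_count_exchange (eq_bigr (fun _ => 2%N)) => [|i _].
  by rewrite big_const_seq count_predT -cardE card_ord iter_addn_0 mulnC.
have ne : side i true != side i false by apply/eqP => /ffunP/(_ i); rewrite !side_at.
transitivity #|pred2 (side i true) (side i false)|; last by rewrite card2 ne.
apply: eq_card => s.
rewrite !inE; apply/andP/orP => [[_ /eqP ->] | [] /eqP ->].
- by case: (s i); [left | right].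
- by rewrite side_adjacent side_at.
- by rewrite side_adjacent side_at.
Qed.

Lemma sum_link_count Lp : boundary_link_points a b Lp ->
  (\sum_(s in adjacent_signs) comp_link_count Lp (cell s) <= size Lp)%N.
Proof.
case=> _ onL; rewrite sum_count_exchange -sum1_size big_seq [X in (_ <= X)%N]big_seq.
apply: leq_sum => q /onL [/circle_disk dq offq].
have Wq : W q by split => // -[j _ /offq].
rewrite -(card1 (signs q)); apply/subset_leq_card/fintype.subsetP => s.
rewrite !inE => /andP[_ /set_mem qs]; apply/eqP/ffunP => j; rewrite ffunE.
by apply: closure_cell_sign qs _; case/pinched_complementE: Wq.
Qed.

Lemma adjacent_cell_nonempty s : s \in adjacent_signs -> exists p, cell s p.
Proof. by case/imset2P => i e _ _ ->; exact: cell_side_nonempty. Qed.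

Lemma pinch_count_adjacent_gt0 s :
  s \in adjacent_signs -> (0 < comp_pinch_count a b (cell s))%N.
Proof.
case/imset2P => i e _ _ ->; rewrite pinch_count_cell -has_count.
by apply/hasP; exists i; rewrite ?mem_enum // side_at.
Qed.

End Chords.

Theorem proposition7p1 (R : realType) (m : nat) (a b : 'I_m -> R * R)
    (Lp : seq (R * R)) :
  (1 <= m)%N ->
  pinch_data a b ->
  boundary_link_points a b Lp ->
  (forall p, pinched_complement a b p ->
     let U0 := connected_component (pinched_complement a b) p in
     let k := comp_pinch_count a b U0 in
     let n := comp_link_count Lp U0 in
     [/\ n = k %[mod 2],
         k = 1%N -> (3 <= n)%N &
         k = 2%N -> (2 <= n)%N]) ->
  (2 * m + 4 <= size Lp)%N.
Proof.
move=> m1 chords onL H.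
have count_ge4 s : s \in adjacent_signs a b ->
    (4 <= comp_link_count Lp (cell a b s) + comp_pinch_count a b (cell a b s))%N.
  move=> sT; have [p [Wp ps]] := adjacent_cell_nonempty chords sT.
  have [] := H p Wp; rewrite /= (component_cell chords Wp) ps => n_k k1 k2.
  exact: parity_add_ge4 (pinch_count_adjacent_gt0 chords sT) n_k k1 k2.
have := leq_sum (index_enum _) count_ge4.
rewrite sum_nat_const big_split /= sum_pinch_count //.
move/leq_trans/(_ (leq_add (sum_link_count chords onL) (leqnn _))).
move/(leq_trans (leq_mul (card_adjacent_signs a b m1) (leqnn 4))); lia.
Qed.
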